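(* Let $X$ be a finite rack acting strongly on a set $M$. Let $x\in X$ be of order $k$ in $X$. Then every element $m\cdot(x_i)_{i=1}^r$ (with $m\in M$, $x_1,\ldots,x_r\in X$), where $x$ appears $k$ times in the sequence $x_1,\ldots,x_r$, can be written as $m\cdot(y_j)_{j=1}^{r-k}$ for some $y_1,\ldots,y_{r-k}\in X$.
   Context: A rack is a set $X$ with a binary operation $\rhd$ such that each $x\mapsto x\rhd y$ is bijective and $(x\rhd y)\rhd z=(x\rhd z)\rhd(y\rhd z)$. A stabilizing family of $X$ is a finite family $(u_1,\ldots,u_s)$ with $(\cdots(z\rhd u_1)\cdots)\rhd u_s=z$ for all $z\in X$. The order of $x\in X$ is the least $k\ge1$ such that the constant family $(x,\ldots,x)$ of length $k$ is a stabilizing family. A rack action of $X$ on $M$ is a map $(m,x)\mapsto m\cdot x$ such that each $m\mapsto m\cdot x$ is a bijection, $(m\cdot x)\cdot y=(m\cdot y)\cdot(x\rhd y)$, and for every stabilizing family $(u_1,\ldots,u_s)$ and every cyclic shift $\sigma$ of $\{1,\ldots,s\}$, $m\cdot(u_i)_i=m\cdot(u_{\sigma(i)})_i$, where $m\cdot(x_i)_{i=1}^s:=(\cdots(m\cdot x_1)\cdots)\cdot x_s$. The action is strong if every stabilizing family $(u_1,\ldots,u_s)$ of $X$ satisfies $m\cdot(u_i)_i=m$ for all $m\in M$. *)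

From mathcomp Require Import all_boot.
Set Implicit Arguments. Unset Strict Implicit. Unset Printing Implicit Defensive.

Definition is_rack (X : Type) (op : X -> X -> X) : Prop :=
  (forall y, bijective (fun x => op x y)) /\
  (forall x y z, op (op x y) z = op (op x z) (op y z)).

Definition rack_iter (X : Type) (op : X -> X -> X) (z : X) (s : seq X) : X :=
  foldl op z s.

Definition stabilizing (X : Type) (op : X -> X -> X) (s : seq X) : Prop :=
  forall z, rack_iter op z s = z.

Definition rack_order_is (X : Type) (op : X -> X -> X) (x : X) (k : nat) : Prop :=
  0 < k /\ stabilizing op (nseq k x) /\
  (forall j, 0 < j < k -> ~ stabilizing op (nseq j x)).

(* m . (x_i)_{i=1}^s := (... (m . x_1) ...) . x_s *)
Definition act_seq (X M : Type) (act : M -> X -> M) (m : M) (s : seq X) : M :=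
  foldl act m s.

Definition is_rack_action (X M : Type) (op : X -> X -> X) (act : M -> X -> M) : Prop :=
  (forall x, bijective (fun m => act m x)) /\
  (forall m x y, act (act m x) y = act (act m y) (op x y)) /\
  (forall s, stabilizing op s -> forall n m, act_seq act m s = act_seq act m (rot n s)).

Definition strong_action (X M : Type) (op : X -> X -> X) (act : M -> X -> M) : Prop :=
  forall s, stabilizing op s -> forall m, act_seq act m s = m.

From mathcomp Require Import all_boot.

Set Implicit Arguments.
Unset Strict Implicit.

(* Using the action axiom m.a.y = m.y.(a |> y), an occurrence of any letter can
   be moved to the right past every later letter, at the cost of rewriting it as
   a |> (those letters).  Pushing every letter other than x to the right gathers
   the k occurrences of x at the front; they form the stabilizing family
   (x, ..., x), which a strong action erases, leaving r - k letters.
   Only the action axiom and the stabilizing family (x, ..., x) of length k are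
   used: neither the rack axioms, finiteness, nor the minimality of k matter. *)

Section GatherLetter.

Variables (X : eqType) (M : Type) (op : X -> X -> X) (act : M -> X -> M).
Hypothesis act_opE : forall m a y, act (act m a) y = act (act m y) (op a y).

Lemma act_seq_cat m s t : act_seq act m (s ++ t) = act_seq act (act_seq act m s) t.
Proof. exact: foldl_cat. Qed.

Lemma act_seq_act m a s :
  act_seq act (act m a) s = act (act_seq act m s) (rack_iter op a s).
Proof. by elim: s m a => [|y s IHs] m a //=; rewrite act_opE IHs. Qed.

Lemma act_seq_gather x m s :
  exists t, size t = size s - count_mem x s /\
    act_seq act m s = act_seq act m (nseq (count_mem x s) x ++ t).
Proof.
elim: s m => [|a s IHs] m; first by exists [::].
have [t [size_t IHm]] := IHs (act m a).
have [eq_ax | neq_ax] := eqVneq a x.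
  by subst a; exists t; rewrite /= eqxx add1n subSS.
exists (rack_iter op a (nseq (count_mem x s) x) :: t).
rewrite /= (negbTE neq_ax) add0n size_t subSn ?count_size //; split=> //.
by rewrite IHm !act_seq_cat act_seq_act.
Qed.

End GatherLetter.

Theorem mainTheorem19 (X : finType) (op : X -> X -> X) (M : Type)
  (act : M -> X -> M) (x : X) (k : nat) :
  is_rack op -> is_rack_action op act -> strong_action op act ->
  rack_order_is op x k ->
  forall (m : M) (s : seq X), count_mem x s = k ->
  exists t : seq X, size t = size s - k /\ act_seq act m s = act_seq act m t.
Proof.
move=> _ [_ [act_opE _]] strong [_ [stab_xk _]] m s count_x.
have [t [size_t gathered]] := act_seq_gather act_opE x m s.
exists t; split; first by rewrite size_t count_x.
by rewrite gathered act_seq_cat count_x (strong _ stab_xk).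
Qed.
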